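(* Let $(X,\mu)$ and $(Z,\nu)$ be standard Borel probability spaces, and let $z\mapsto\mu_z$ be a measurable family of uniformly bounded finite Borel measures on $X$ such that $\mu=\int_Z\mu_z\,\nu(dz)$ and $\mu_z\ll_{M,\varepsilon}\mu$ for every $z\in Z$. Suppose that for each $z\in Z$, $Y_z\subseteq X$ is a Borel set with $\mu_z(Y_z)=1$. Then for every $\alpha<1-\varepsilon$ there is a finite set $S\subseteq Z$ with \[|S|\le\frac{M}{1-\alpha-\varepsilon}\quad\text{and}\quad \mu\Big(\bigcup_{z\in S}Y_z\Big)>\alpha.\]
   Context: For finite measures $\mu,\nu$ on a measurable space and $M\in(0,\infty)$, $\varepsilon\in[0,\infty)$, write $\mu\ll_{M,\varepsilon}\nu$ if $\mu(A)\le M\nu(A)+\varepsilon$ for every measurable $A$. The measures $\mu_z$ need not be probability measures. *)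

From HB Require Import structures.
From mathcomp Require Import all_boot all_order all_algebra.
From mathcomp Require Import all_classical all_reals all_analysis.
Set Implicit Arguments. Unset Strict Implicit. Unset Printing Implicit Defensive.
Import Order.TTheory GRing.Theory Num.Theory.
Local Open Scope classical_set_scope.
Local Open Scope ring_scope.

(* A measurable space is standard Borel iff it is Borel isomorphic to a Borel
   subset of R (Kuratowski): there is a measurable injection into R whose image
   is Borel and which maps measurable sets to measurable sets (so its inverse
   on the image is measurable). *)
Definition standard_borel d (T : measurableType d) (R : realType) : Prop :=
  exists f : T -> R,
    [/\ measurable_fun setT f, injective f, measurable (range f)
      & forall A : set T, measurable A -> measurable (f @` A)].

Definition abs_cont_Meps d (T : measurableType d) (R : realType)
  (M eps : R) (mu nu : set T -> \bar R) : Prop :=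
  forall A : set T, measurable A -> (mu A <= M%:E * nu A + eps%:E)%E.

From HB Require Import structures.
From mathcomp Require Import all_boot all_order all_algebra.
From mathcomp Require Import all_classical all_reals all_analysis.
From mathcomp Require Import measurable_realfun.
From mathcomp Require Import lra.
Set Implicit Arguments. Unset Strict Implicit. Unset Printing Implicit Defensive.
Import Order.TTheory GRing.Theory Num.Theory.
Local Open Scope classical_set_scope.
Local Open Scope ring_scope.
Local Open Scope ereal_scope.

(* Greedy covering. Since [mu] is the [nu]-average of the [k z], every
   measurable [A] has some [z] with [k z A <= mu A]. If moreover
   [mu A <= alpha], then [1 = k z (Y z) <= M mu (Y z `\` A) + eps + k z A]
   forces [mu (Y z `\` A) >= (1 - alpha - eps) / M]: adding [Y z] to the cover
   [A] gains at least that much mass. As [mu <= 1], after at most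
   [M / (1 - alpha - eps)] such steps the cover has mass above [alpha]. *)

Lemma exists_le_integral (R : realType) d (T : measurableType d)
  (P : probability T R) (g : T -> \bar R) (c : R) :
  measurable_fun [set: T] g -> (forall t, 0 <= g t) ->
  \int[P]_t g t = c%:E -> exists t, g t <= c%:E.
Proof.
move=> mg g0 gc; apply: contrapT => /forallNP c_lt_g.
have {}c_lt_g t : c%:E < g t by rewrite ltNge; apply/negP/c_lt_g.
pose h t := g t - c%:E.
have h0 t : 0 <= h t by rewrite sube_ge0 ?ltW.
have mh : measurable_fun setT h by exact: emeasurable_funB.
have c0 : (0 <= c)%R by rewrite -lee_fin -gc; exact: integral_ge0.
have int_h : \int[P]_t h t = 0.
  have : \int[P]_t g t = \int[P]_t h t + c%:E.
    rewrite -[c%:E]mule1 -(probability_setT P) -integral_cst// -ge0_integralD//.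
    by apply: eq_integral => t _; rewrite /h subeK.
  rewrite gc; case: (\int[P]_t h t) => [r| |]//= [].
  by move=> /(congr1 (fun x => x - c)%R); rewrite subrr addrK => <-.
have [N [mN PN0 hN]] : ae_eq P setT h (cst 0).
  apply/(ae_eq_integral_abs P measurableT mh).
  by rewrite -int_h; apply: eq_integral => t _; rewrite gee0_abs.
have : P setT <= P N.
  apply: le_measure; rewrite ?inE// => t _; apply: hN => /(_ I).
  by apply/eqP; rewrite gt_eqF// sube_gt0.
by rewrite probability_setT PN0 lee_fin ler10.
Qed.

Section GreedyCover.
Context (R : realType) (dX dZ : measure_display).
Context (X : measurableType dX) (Z : measurableType dZ).
Context (mu : probability X R) (nu : probability Z R) (k : R.-fker Z ~> X).
Context (M eps alpha : R) (Y : Z -> set X).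
Hypothesis M_gt0 : (0 < M)%R.
Hypothesis alpha_lt : (alpha < 1 - eps)%R.
Hypothesis mu_mixture : forall A, measurable A -> mu A = \int[nu]_z k z A.
Hypothesis k_abs_cont : forall z, abs_cont_Meps M eps (k z) mu.
Hypothesis mY : forall z, measurable (Y z).
Hypothesis kY_eq1 : forall z, k z (Y z) = 1.

Local Notation cover S := (\big[setU/set0]_(z <- S) Y z).
Local Notation gain := ((1 - alpha - eps) / M)%R.

Lemma measurable_cover S : measurable (cover S).
Proof.
by elim: S => [|z S IH]; rewrite ?big_nil ?big_cons//; exact: measurableU.
Qed.

Lemma exists_kernel_le_mixture A : measurable A -> exists z, k z A <= mu A.
Proof.
move=> mA; rewrite -(fineK (fin_num_measure mu A mA)).
apply: exists_le_integral => //; first exact: measurable_kernel.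
by rewrite fineK; [exact/esym/mu_mixture | exact: fin_num_measure].
Qed.

Lemma le1_new_mass_add_kernel z A : measurable A ->
  1 <= (M * fine (mu (Y z `\` A)) + eps)%:E + k z A.
Proof.
move=> mA; have mYA := measurableD (mY z) mA.
rewrite -(kY_eq1 z) (measureDI (k z) (mY z) mA); apply: leeD.
  by rewrite EFinD EFinM fineK ?fin_num_measure//; exact: k_abs_cont.
by apply: le_measure; rewrite ?inE//; exact: measurableI.
Qed.

Lemma exists_new_mass_ge_gain A : measurable A -> mu A <= alpha%:E ->
  exists z, (gain <= fine (mu (Y z `\` A)))%R.
Proof.
move=> mA muA; have [z kzA] := exists_kernel_le_mixture mA.
exists z; rewrite ler_pdivrMr//.
have := le_trans (le1_new_mass_add_kernel z mA) (leeD2l _ (le_trans kzA muA)).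
rewrite -EFinD lee_fin; lra.
Qed.

Lemma gain_gt0 : (0 < gain)%R.
Proof. by apply: divr_gt0 => //; move: alpha_lt; lra. Qed.

Lemma measure_cover_cons z S :
  mu (cover (z :: S)) = mu (cover S) + mu (Y z `\` cover S).
Proof.
have mS := measurable_cover S.
rewrite big_cons (measureDI mu (measurableU _ _ (mY z) mS) mS) addeC.
by rewrite setDUD setDv setU0 setIidr//; exact: subsetUr.
Qed.

Lemma greedy_extend S : ((size S)%:R * gain)%:E <= mu (cover S) ->
  mu (cover S) <= alpha%:E ->
  exists z, z \notin S /\ ((size S).+1%:R * gain)%:E <= mu (cover (z :: S)).
Proof.
move=> muS muS_alpha; have mS := measurable_cover S.
have [z gain_le] := exists_new_mass_ge_gain mS muS_alpha.
have mYS := measurableD (mY z) mS.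
exists z; split.
  apply/negP => zS; suff : Y z `\` cover S = set0.
    by move=> YS0; move: gain_le; rewrite YS0 measure0 /= leNgt gain_gt0.
  by rewrite setD_eq0 (big_rem z zS) /=; exact: subsetUl.
rewrite measure_cover_cons -nat1r mulrDl mul1r addrC EFinD.
by apply: leeD => //; rewrite -(fineK (fin_num_measure mu _ mYS)) lee_fin.
Qed.

Lemma greedy_cover n : exists S : seq Z,
  [/\ uniq S, ((size S)%:R * gain)%:E <= mu (cover S)
    & alpha%:E < mu (cover S) \/ size S = n].
Proof.
elim: n => [|n [S [uS muS [alpha_lt_S|sizeS]]]].
- by exists [::]; rewrite mul0r measure_ge0; split => //; right.
- by exists S; split => //; left.
have [alpha_lt_S|S_le_alpha] := ltP alpha%:E (mu (cover S)).
  by exists S; split => //; left.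
have [z [zS muzS]] := greedy_extend muS S_le_alpha.
by exists (z :: S); split => //=; [rewrite zS | right; rewrite sizeS].
Qed.

Lemma exists_greedy_cover : exists S : seq Z,
  [/\ uniq S, ((size S)%:R <= M / (1 - alpha - eps))%R
    & alpha%:E < mu (cover S)].
Proof.
have [n n_gain] : exists n : nat, (1 < n%:R * gain)%R.
  exists (Num.bound gain^-1); rewrite -ltr_pdivrMr ?gain_gt0// div1r.
  by apply: archi_boundP; rewrite invr_ge0 ltW ?gain_gt0.
have [S [uS muS [alpha_lt_S|sizeS]]] := greedy_cover n.
  exists S; split => //; rewrite -invf_div -div1r ler_pdivlMr ?gain_gt0// -lee_fin.
  exact: le_trans muS (probability_le1 mu (measurable_cover S)).
have := le_trans muS (probability_le1 mu (measurable_cover S)).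
by rewrite sizeS lee_fin leNgt n_gain.
Qed.

End GreedyCover.

Local Close Scope ereal_scope.

Theorem mainTheorem9 (R : realType) (dX dZ : measure_display)
  (X : measurableType dX) (Z : measurableType dZ)
  (mu : probability X R) (nu : probability Z R)
  (k : R.-fker Z ~> X) (M eps : R) (Y : Z -> set X) (alpha : R) :
  standard_borel X R -> standard_borel Z R ->
  0 < M -> 0 <= eps ->
  (forall A : set X, measurable A -> mu A = (\int[nu]_z k z A)%E) ->
  (forall z, abs_cont_Meps M eps (k z) mu) ->
  (forall z, measurable (Y z)) ->
  (forall z, k z (Y z) = 1%E) ->
  alpha < 1 - eps ->
  exists S : seq Z,
    [/\ uniq S,
        (size S)%:R <= M / (1 - alpha - eps)
      & (alpha%:E < mu (\big[setU/set0]_(z <- S) Y z))%E].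
Proof.
move=> _ _ M_gt0 _ mu_mixture k_abs_cont mY kY1 alpha_lt.
exact: (exists_greedy_cover M_gt0 alpha_lt mu_mixture k_abs_cont mY kY1).
Qed.
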